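(* Let $\mathbf A$ be a Pavelka algebra and $\exists\colon A\to A$ a closure operator, and put $\forall(x)=\neg\exists(\neg x)$. Then $(\mathbf A,\exists)$ is a monadic Pavelka algebra if and only if $(\mathbf A,\forall,\forall)$ is a tense Pavelka algebra.
   Context: An MV-algebra $(A;\oplus,\neg,0)$ carries derived operations $1=\neg0$, $x\cdot y=\neg(\neg x\oplus\neg y)$, $x\rightarrow y=\neg x\oplus y$, lattice operations $\vee,\wedge$ of the order $x\le y$ iff $\neg x\oplus y=1$. A Pavelka algebra is $\mathbf A=(A;\oplus,\neg,\{\mathbf r\mid r\in[0,1]\cap\mathbb Q\})$ with $(A;\oplus,\neg,\mathbf 0)$ an MV-algebra, $\mathbf r\oplus\mathbf s=\mathbf t$ whenever $\min\{r+s,1\}=t$, and $\neg\mathbf r=\mathbf s$ whenever $1-r=s$. A closure operator is a monotone $C$ with $x\le C(x)$, $C(C(x))=C(x)$. A monadic Pavelka algebra is a pair $(\mathbf A,\exists)$ with $\exists$ a closure operator on $A$ such that $\exists(\neg\exists(x))=\neg\exists(x)$ and $\mathbf r\cdot\exists(x)=\exists(\mathbf r\cdot x)$ for all $x\in A$ and constants $\mathbf r$. A tense Pavelka algebra is $(\mathbf A,G,H)$ with $G,H\colon A\to A$ such that for all $x,y$ and constants $\mathbf r$: (PT1) $G(x\wedge y)=G(x)\wedge G(y)$, $H(x\wedge y)=H(x)\wedge H(y)$; (PT2) $\mathbf r\rightarrow G(x)=G(\mathbf r\rightarrow x)$, $\mathbf r\rightarrow H(x)=H(\mathbf r\rightarrow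 x)$; (PT3) $\neg H(\neg G(x))\le x$, $\neg G(\neg H(x))\le x$. *)

From HB Require Import structures.
From mathcomp Require Import all_boot all_order all_algebra.
Set Implicit Arguments. Unset Strict Implicit. Unset Printing Implicit Defensive.
Import Order.TTheory GRing.Theory Num.Theory.
Local Open Scope ring_scope.

(* Signature of a Pavelka algebra: carrier, oplus, neg, and the constants
   r (for r rational); only constants with 0 <= r <= 1 matter. *)
Record pavelka_sig := PSig {
  car :> Type;
  op : car -> car -> car;
  ng : car -> car;
  cst : rat -> car
}.

Section Derived.
Variable P : pavelka_sig.
Definition pzero : P := @cst P 0.
Definition pone : P := ng pzero.
Definition pmul (x y : P) : P := ng (op (ng x) (ng y)).
Definition pimp (x y : P) : P := op (ng x) y.
Definition ple (x y : P) : Prop := op (ng x) y = pone.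
(* standard MV-algebra lattice operations (join/meet of the order ple) *)
Definition pjoin (x y : P) : P := op (ng (op (ng x) y)) y.
Definition pmeet (x y : P) : P := ng (pjoin (ng x) (ng y)).

Definition is_const_index (r : rat) : bool := (0 <= r) && (r <= 1).

Record is_mv_algebra : Prop := {
  mv_assoc : forall x y z : P, op (op x y) z = op x (op y z);
  mv_comm  : forall x y : P, op x y = op y x;
  mv_zero  : forall x : P, op x pzero = x;
  mv_negK  : forall x : P, ng (ng x) = x;
  mv_one   : forall x : P, op x pone = pone;
  mv_luk   : forall x y : P, op (ng (op (ng x) y)) y = op (ng (op (ng y) x)) x
}.

Record is_pavelka : Prop := {
  pv_mv : is_mv_algebra;
  pv_add : forall r s t, is_const_index r -> is_const_index s -> is_const_index t ->
             Num.min (r + s) 1 = t -> op (@cst P r) (@cst P s) = @cst P t;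
  pv_neg : forall r s, is_const_index r -> is_const_index s ->
             1 - r = s -> ng (@cst P r) = @cst P s
}.

Definition closure_op (C : P -> P) : Prop :=
  (forall x y : P, ple x y -> ple (C x) (C y)) /\
  (forall x : P, ple x (C x)) /\
  (forall x : P, C (C x) = C x).

Definition is_monadic (E : P -> P) : Prop :=
  closure_op E /\
  (forall x : P, E (ng (E x)) = ng (E x)) /\
  (forall r (x : P), is_const_index r -> pmul (@cst P r) (E x) = E (pmul (@cst P r) x)).

Definition is_tense (G H : P -> P) : Prop :=
  (* PT1 *)
  (forall x y : P, G (pmeet x y) = pmeet (G x) (G y) /\ H (pmeet x y) = pmeet (H x) (H y)) /\
  (* PT2 *)
  (forall r (x : P), is_const_index r ->
     pimp (@cst P r) (G x) = G (pimp (@cst P r) x) /\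
     pimp (@cst P r) (H x) = H (pimp (@cst P r) x)) /\
  (* PT3 *)
  (forall x : P, ple (ng (H (ng (G x)))) x /\ ple (ng (G (ng (H x)))) x).

Definition univ_of (E : P -> P) : P -> P := fun x => ng (E (ng x)).
End Derived.

(* With [A x := ~ E ~ x] the operator [A] is a dual ("interior") operator, and
   each tense axiom for [(A, A)] is the dual of a monadic axiom for [E]:
   PT3 says exactly that the fixed points of [E] are closed under negation,
   and PT2 is the De Morgan dual of [r * E x = E (r * x)].  PT1 only has to be
   checked in one direction: once the fixed points of the closure operator
   [E] are closed under negation, they form a sublattice, so [E] preserves
   joins and [A] preserves meets. *)
From mathcomp Require Import all_boot all_order all_algebra.

Set Implicit Arguments.
Unset Strict Implicit.

Section MVAlgebraOrder.
Variable P : pavelka_sig.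
Hypothesis M : is_mv_algebra P.

Local Notation opA := (mv_assoc M).
Local Notation opC := (mv_comm M).
Local Notation op0 := (mv_zero M).
Local Notation ngK := (mv_negK M).
Local Notation op1 := (mv_one M).
Local Notation luk := (mv_luk M).

Lemma ng_pone : ng (pone P) = pzero P.
Proof. by rewrite /pone ngK. Qed.

Lemma op0x (x : P) : op (pzero P) x = x.
Proof. by rewrite opC op0. Qed.

Lemma op1x (x : P) : op (pone P) x = pone P.
Proof. by rewrite opC op1. Qed.

Lemma opNx (x : P) : op (ng x) x = pone P.
Proof. by have := luk x (pone P); rewrite op1 ng_pone !op0x => ->. Qed.

Lemma ple_refl (x : P) : ple x x.
Proof. exact: opNx. Qed.

Lemma ple_op (x z : P) : ple x (op x z).
Proof. by rewrite /ple -opA opNx op1x. Qed.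

Lemma pleP (x y : P) : ple x y -> exists z, y = op x z.
Proof.
move=> lexy; exists (ng (op (ng y) x)).
by have := luk x y; rewrite lexy ng_pone op0x (opC x) => <-.
Qed.

Lemma ple_trans (x y z : P) : ple x y -> ple y z -> ple x z.
Proof. by move=> /pleP [a ->] /pleP [b ->]; rewrite opA; apply: ple_op. Qed.

Lemma ple_anti (x y : P) : ple x y -> ple y x -> x = y.
Proof. by move=> lexy leyx; have := luk x y; rewrite lexy leyx ng_pone !op0x. Qed.

Lemma ple_ng (x y : P) : ple x y -> ple (ng y) (ng x).
Proof. by rewrite /ple ngK opC. Qed.

Lemma ple_opr (x y c : P) : ple x y -> ple (op x c) (op y c).
Proof. by move=> /pleP [d ->]; rewrite (opA x d c) (opC d c) -opA; apply: ple_op. Qed.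

Lemma pjoin_ubl (x y : P) : ple x (pjoin x y).
Proof. by rewrite /pjoin luk opC; apply: ple_op. Qed.

Lemma pjoin_ubr (x y : P) : ple y (pjoin x y).
Proof. by rewrite /pjoin opC; apply: ple_op. Qed.

Lemma pjoin_lub (x y z : P) : ple x z -> ple y z -> ple (pjoin x y) z.
Proof.
move=> lexz leyz.
have lejoin : ple (pjoin x y) (pjoin z y).
  by apply/ple_opr/ple_ng/ple_opr/ple_ng.
by apply: (ple_trans lejoin); rewrite /pjoin luk leyz ng_pone op0x; apply: ple_refl.
Qed.

Lemma pmeet_lbl (x y : P) : ple (pmeet x y) x.
Proof. by rewrite /pmeet -{2}(ngK x); apply/ple_ng/pjoin_ubl. Qed.

Lemma pmeet_lbr (x y : P) : ple (pmeet x y) y.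
Proof. by rewrite /pmeet -{2}(ngK y); apply/ple_ng/pjoin_ubr. Qed.

Lemma pmeet_glb (x y z : P) : ple z x -> ple z y -> ple z (pmeet x y).
Proof. by move=> lezx lezy; rewrite /pmeet -(ngK z); apply/ple_ng/pjoin_lub; apply: ple_ng. Qed.

Lemma pjoinE (x y : P) : pjoin x y = ng (pmeet (ng x) (ng y)).
Proof. by rewrite /pmeet !ngK. Qed.

End MVAlgebraOrder.

Section ClosureOperator.
Variable P : pavelka_sig.
Hypothesis M : is_mv_algebra P.
Variable E : P -> P.
Hypothesis E_mono : forall x y : P, ple x y -> ple (E x) (E y).
Hypothesis E_ext : forall x : P, ple x (E x).
Hypothesis E_idem : forall x : P, E (E x) = E x.

Local Notation ngK := (mv_negK M).
Local Notation A := (univ_of E).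

Lemma closure_fixed_pmeet (u v : P) :
  E u = u -> E v = v -> E (pmeet u v) = pmeet u v.
Proof.
move=> Eu Ev; apply: (ple_anti M); last exact: E_ext.
apply: (pmeet_glb M).
- by rewrite -{2}Eu; apply/E_mono/(pmeet_lbl M).
- by rewrite -{2}Ev; apply/E_mono/(pmeet_lbr M).
Qed.

Section NegationClosedFixedPoints.
Hypothesis E_ngE : forall x : P, E (ng (E x)) = ng (E x).

Lemma closure_fixed_pjoin (a b : P) : E (pjoin (E a) (E b)) = pjoin (E a) (E b).
Proof.
have Emeet := closure_fixed_pmeet (E_ngE a) (E_ngE b).
by rewrite (pjoinE M) -{1}Emeet E_ngE Emeet.
Qed.

Lemma closure_pjoin (a b : P) : E (pjoin a b) = pjoin (E a) (E b).
Proof.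
apply: (ple_anti M).
- rewrite -closure_fixed_pjoin; apply/E_mono/(pjoin_lub M).
  + exact: (ple_trans M (E_ext a) (pjoin_ubl M _ _)).
  + exact: (ple_trans M (E_ext b) (pjoin_ubr M _ _)).
- by apply: (pjoin_lub M); apply: E_mono; [apply: pjoin_ubl | apply: pjoin_ubr].
Qed.

Lemma univ_pmeet (x y : P) : A (pmeet x y) = pmeet (A x) (A y).
Proof. by rewrite /univ_of /pmeet ngK closure_pjoin !ngK. Qed.

End NegationClosedFixedPoints.

Lemma univ_dual_iff :
  (forall x : P, ple (ng (A (ng (A x)))) x) <->
  (forall x : P, E (ng (E x)) = ng (E x)).
Proof.
rewrite /univ_of; split=> [PT3 y | E_ngE x].
- apply: (ple_anti M); last exact: E_ext.
  by have := PT3 (ng (E y)); rewrite !ngK E_idem.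
- by rewrite !ngK E_ngE -{2}(ngK x); apply/(ple_ng M)/E_ext.
Qed.

Lemma univ_pimp_iff (c : P) :
  (forall x : P, pmul c (E x) = E (pmul c x)) <->
  (forall x : P, pimp c (A x) = A (pimp c x)).
Proof.
have pmul_ng x : pmul c (E (ng x)) = ng (pimp c (A x)) by [].
have E_pmul_ng x : E (pmul c (ng x)) = ng (A (pimp c x)).
  by rewrite /univ_of /pmul /pimp !ngK.
split=> [mulE x | impA x].
- by rewrite -[LHS]ngK -pmul_ng mulE E_pmul_ng ngK.
- by rewrite -(ngK x) pmul_ng E_pmul_ng impA.
Qed.

End ClosureOperator.

Theorem theorem14 (P : pavelka_sig) (HP : is_pavelka P) (E : P -> P)
  (HE : closure_op E) :
  is_monadic E <-> is_tense (univ_of E) (univ_of E).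
Proof.
have M := pv_mv HP.
have [E_mono [E_ext E_idem]] := HE.
have PT3_iff := univ_dual_iff M E_ext E_idem.
have PT2_iff c := univ_pimp_iff M E c.
split.
- move=> [_ [E_ngE mulE]]; split; [|split].
  + by move=> x y; rewrite univ_pmeet.
  + move=> r x hr.
    by rewrite (proj1 (PT2_iff _) (fun y => mulE r y hr)).
  + by move=> x; have := proj2 PT3_iff E_ngE x.
- move=> [_ [PT2 PT3]]; split; first exact: HE.
  split.
  + by apply/PT3_iff => x; case: (PT3 x).
  + move=> r x hr; apply: (proj2 (PT2_iff _)) => y.
    by case: (PT2 r y hr).
Qed.
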